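(* Let $(X,d)$ be a metric space and $\ell:X\to[0,+\infty)$ lower semicontinuous with $\inf_X\ell=0$. If $\lambda>0$, then $u_\lambda:=T_\lambda^\infty\frac{\ell}{\lambda}$ is the Perron solution of $(\mathcal{G}_\lambda)$. If $\lambda=0$ and $\ell$ satisfies $(H_0)$, then the function \[u_0(x):=\inf\Big\{\sum_{n=0}^\infty\ell(x_n)d(x_n,x_{n+1}):\{x_n\}_n\subset X,\ x_0=x,\ \lim_{n\to\infty}\ell(x_n)=0\Big\},\quad x\in X,\] is the Perron solution of $(\mathcal{G}_0)$.
   Context: Global slope: $G[u](x)=\sup_{y\neq x}\frac{(u(x)-u(y))_+}{d(x,y)}$ if $u(x)<+\infty$, $G[u](x)=+\infty$ otherwise. A solution of $(\mathcal{G}_\lambda)$ ($\lambda\ge0$) is a lower semicontinuous $u:X\to\mathbb{R}\cup\{+\infty\}$ with $\inf_Xu=0$ and $\lambda u+G[u]=\ell$ on $X$. The Perron solution of $(\mathcal{G}_\lambda)$ is a solution $u$ such that $u(x)=\sup\{v(x): v\text{ solution of }(\mathcal{G}_\lambda)\}$ for all $x$. For $u:X\to[0,+\infty]$, $T_\lambda u(x)=\inf_{y\in X}\frac{u(y)+\ell(x)d(x,y)}{1+\lambda d(x,y)}$ and $T_\lambda^\infty u=\lim_{n\to\infty}T_\lambda^nu$ pointwise. Hypothesis $(H_0)$: there is $\{\bar x_n\}_n\subset X$ with $\sum_n\ell(\bar x_n)d(\bar x_n,\bar x_{n+1})<+\infty$ and $\lim_n\ell(\bar x_n)=0$. *)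

From mathcomp Require Import all_boot all_order all_algebra.
From mathcomp Require Import all_classical all_reals all_analysis.
Set Implicit Arguments. Unset Strict Implicit. Unset Printing Implicit Defensive.
Import Order.TTheory GRing.Theory Num.Theory.
Import numFieldNormedType.Exports.
Local Open Scope classical_set_scope.
Local Open Scope ring_scope.

Section Defs.
Variables (R : realType) (X : Type) (d : X -> X -> R).

Definition is_metric : Prop :=
  [/\ forall x y, 0 <= d x y,
      forall x y, d x y = 0 <-> x = y,
      forall x y, d x y = d y x &
      forall x y z, d x z <= d x y + d y z].

Definition lsc (f : X -> \bar R) : Prop :=
  forall x (t : \bar R), (t < f x)%E ->
    exists2 r : R, 0 < r & forall y, d x y < r -> (t < f y)%E.

Definition G (u : X -> \bar R) (x : X) : \bar R :=
  if u x == +oo%E then +oo%E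
  else ereal_sup ([set 0%E] `|`
         [set (maxe (u x - u y) 0 * ((d x y)^-1)%:E)%E | y in [set y | y <> x]]).

Definition is_solution (ell : X -> R) (lam : R) (u : X -> \bar R) : Prop :=
  [/\ (forall x, u x <> -oo%E),
      lsc u,
      ereal_inf (range u) = 0%E &
      forall x, (lam%:E * u x + G u x)%E = (ell x)%:E].

Definition is_perron_solution (ell : X -> R) (lam : R) (u : X -> \bar R)
  : Prop :=
  is_solution ell lam u /\
  forall x, u x = ereal_sup [set v x | v in is_solution ell lam].

Definition T (ell : X -> R) (lam : R) (u : X -> \bar R) (x : X) : \bar R :=
  ereal_inf [set ((u y + (ell x * d x y)%:E) * ((1 + lam * d x y)^-1)%:E)%E
            | y in [set: X]].

Definition Tinf (ell : X -> R) (lam : R) (u : X -> \bar R) (x : X) : \bar R :=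
  limn (fun n => iter n (T ell lam) u x).

Definition H0 (ell : X -> R) : Prop :=
  exists xs : nat -> X,
    (\sum_(0 <= n <oo) (ell (xs n) * d (xs n) (xs n.+1))%:E < +oo)%E /\
    (fun n => ell (xs n)) @ \oo --> 0.

Definition u0 (ell : X -> R) (x : X) : \bar R :=
  ereal_inf [set (\sum_(0 <= n <oo) (ell (xs n) * d (xs n) (xs n.+1))%:E)%E
            | xs in [set xs : nat -> X | xs 0%N = x /\
                         (fun n => ell (xs n)) @ \oo --> 0]].
End Defs.

From mathcomp Require Import all_boot all_order all_algebra.
From mathcomp Require Import all_classical all_reals all_analysis.
From mathcomp Require Import ring lra.
Import Order.TTheory GRing.Theory Num.Theory numFieldNormedType.Exports.
Local Open Scope classical_set_scope.
Local Open Scope ring_scope.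
Set Implicit Arguments. Unset Strict Implicit. Unset Printing Implicit Defensive.

(* For lam > 0 the iterates T^n (ell / lam) decrease to a finite function u with
   u x * (1 + lam d(x,y)) <= u y + ell x * d(x,y), hence G[u] <= ell - lam u.
   Conversely, if the slope of u at x were smaller, then on a ball around x where
   ell > c (lower semicontinuity) a cone c/lam + (1 + lam d(x,.)) M with M <= 0 stays
   below every iterate, hence below u, although M was chosen so that it exceeds u at x.
   Any solution v lies below ell/lam and below T v, hence below every iterate.
   For lam = 0, prepending x to a path gives u0 x <= ell x * d(x,y) + u0 y; a nearly
   optimal path from x has to leave the ball where ell > c, and its exit point
   witnesses the slope.  A solution v satisfies v x - v y <= ell x * d(x,y), so
   along an admissible path v(x_0) is bounded by the cost up to N plus
   v y + ell(x_N) d(x_N, y); since ell(x_n) -> 0 and the cost series converges,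
   ell(x_N) times the length of the path up to N is small for some N. *)

Section SummableWeights.
Variable R : realType.

Lemma series_tail_le (f : nat -> R) e :
  (forall n, 0 <= f n) -> cvgn (series f) -> 0 < e ->
  exists N0, forall k, \sum_(N0 <= i < k) f i <= e.
Proof.
move=> f_ge0 f_cvg e_gt0.
have S_le := nondecreasing_cvgn_le (nondecreasing_series (fun n _ _ => f_ge0 n)) f_cvg.
have [N0 _ near_lim] := (cvgrPdist_lt _ _).1
  (f_cvg : series f @ \oo --> limn (series f)) e e_gt0.
exists N0 => k; have [kN0|N0k] := leqP k N0; first by rewrite big_geq // ltW.
rewrite -(sub_series_geq f (ltnW N0k)); apply: le_trans (ltW (near_lim N0 (leqnn N0))).
by rewrite (le_trans _ (ler_norm _)) // lerD2r S_le.
Qed.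

Lemma weight_mul_length_small (a l : nat -> R) (C e : R) :
  (forall n, 0 <= a n) -> (forall n, 0 <= l n) -> a @ \oo --> 0 ->
  cvgn (series (fun n => a n * l n)) -> 0 < C -> 0 < e ->
  exists N, a N * (\sum_(0 <= i < N) l i + C) <= e.
Proof.
move=> a_ge0 l_ge0 a_cvg0 al_cvg C_gt0 e_gt0; apply: contrapT => /forallNP large.
pose L N := \sum_(0 <= i < N) l i.
have {}large N : e < a N * (L N + C) by rewrite ltNge; apply/negP/large.
have L_split i k : (i <= k)%N -> L k = L i + \sum_(i <= j < k) l j.
  by move=> ik; rewrite /L (big_cat_nat (leq0n i) ik).
have L_ge0 k : 0 <= L k by rewrite sumr_ge0.
have [N0 tail] := series_tail_le (fun n => mulr_ge0 (a_ge0 n) (l_ge0 n)) al_cvg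
  (divr_gt0 e_gt0 (ltr0Sn _ 1)).
(* On [N0, k) every weight exceeds e / (L k + C), so the tail bound e / 2 keeps
   the lengths bounded; this contradicts a -> 0. *)
have L_bounded k : (N0 <= k)%N -> L k <= 2 * L N0 + C.
  move=> N0k; have LkC : 0 < L k + C by rewrite ltr_wpDl.
  set q := e / (L k + C).
  have q_gt0 : 0 < q by rewrite divr_gt0.
  have a_ge i : (N0 <= i < k)%N -> q <= a i.
    move=> /andP[_ ik]; rewrite ler_pdivrMr //; apply/ltW/(lt_le_trans (large i)).
    by rewrite ler_wpM2l // lerD2r (L_split i k (ltnW ik)) lerDl sumr_ge0.
  have tail_q : q * (L k - L N0) <= e / 2.
    apply: le_trans (tail k); rewrite (L_split N0 k N0k) addrC addKr mulr_sumr.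
    by apply: ler_sum_nat => i /a_ge qa; rewrite ler_wpM2r.
  suff : L k - L N0 <= (L k + C) / 2 by lra.
  rewrite -(ler_pM2l q_gt0); apply: le_trans tail_q _.
  by rewrite /q mulrA divfK ?gt_eqF.
pose B := 2 * L N0 + 2 * C.
have B_gt0 : 0 < B by rewrite /B ltr_wpDl ?mulr_ge0 // mulr_gt0.
have [N1 _ a_small] := (cvgrPdist_lt _ _).1 a_cvg0 (e / B) (divr_gt0 e_gt0 B_gt0).
set k := maxn N1 N0.
have ak_small : a k < e / B.
  by apply: le_lt_trans (a_small k (leq_maxl _ _)); rewrite sub0r normrN ler_norm.
have : a k * (L k + C) <= a k * B.
  by rewrite ler_wpM2l // /B; have := L_bounded k (leq_maxr _ _); lra.
have := large k; rewrite ltr_pdivlMr // in ak_small; lra.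
Qed.

End SummableWeights.

Section GlobalSlope.
Variables (R : realType) (X : Type) (d : X -> X -> R).
Hypothesis md : is_metric d.

Lemma metric_ge0 x y : 0 <= d x y.
Proof. by case: md. Qed.

Lemma metric_xx x : d x x = 0.
Proof. by case: md => _ dP _ _; apply/dP. Qed.

Lemma metric_gt0 x y : x <> y -> 0 < d x y.
Proof.
case: md => d_ge0 dP _ _ xy; rewrite lt_neqAle d_ge0 andbT.
by apply/eqP => /esym /dP.
Qed.

Lemma metric_triangle x y z : d x z <= d x y + d y z.
Proof. by case: md. Qed.

Lemma metric_triangle_l x y z : d y z <= d x y + d x z.
Proof. by case: md => _ _ d_sym _; rewrite (d_sym x y) metric_triangle. Qed.

Lemma metric_le_path_length (xs : nat -> X) k :
  d (xs 0%N) (xs k) <= \sum_(0 <= i < k) d (xs i) (xs i.+1).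
Proof.
elim: k => [|k IH]; first by rewrite big_geq // metric_xx.
rewrite big_nat_recr //=; apply: le_trans (metric_triangle _ (xs k) _) _.
by rewrite lerD2r.
Qed.

Lemma G_ge0 (u : X -> \bar R) x : (0 <= G d u x)%E.
Proof. by rewrite /G; case: ifP => _ //; apply: ereal_sup_ubound; left. Qed.

Lemma G_ge_quotient (u : X -> R) x y : y <> x ->
  ((Num.max (u x - u y) 0 / d x y)%:E <= G d (fun z => (u z)%:E) x)%E.
Proof.
move=> yx; rewrite /G /=.
by apply: ereal_sup_ubound; right; exists y => //; rewrite -EFinB -EFin_max.
Qed.

Lemma G_le (u : X -> R) x (g : R) : 0 <= g ->
  (forall y, y <> x -> u x - u y <= g * d x y) ->
  (G d (fun z => (u z)%:E) x <= g%:E)%E.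
Proof.
move=> g_ge0 u_sub; rewrite /G /=.
apply: ge_ereal_sup => _ [->|[y yx <-]]; first by rewrite lee_fin.
have dxy_gt0 : 0 < d x y by apply/metric_gt0/nesym.
rewrite -EFinB -EFin_max -EFinM lee_fin ler_pdivrMr // ge_max u_sub //.
by rewrite mulr_ge0 // ltW.
Qed.

Lemma G_ge_witness (u : X -> R) x (g : R) :
  (forall eta, 0 < eta -> eta < g ->
     exists2 w, 0 < d x w & (g - eta) * d x w <= u x - u w) ->
  (g%:E <= G d (fun z => (u z)%:E) x)%E.
Proof.
move=> witness; apply/lee_subgt0Pr => eta eta_gt0; rewrite -EFinB.
have [g_le|eta_lt] := leP g eta.
  by apply: le_trans (G_ge0 _ x); rewrite lee_fin subr_le0.
have [w dxw_gt0 slope] := witness eta eta_gt0 eta_lt.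
have wx : w <> x by move=> wx; move: dxw_gt0; rewrite wx metric_xx ltxx.
apply: le_trans (G_ge_quotient u wx); rewrite lee_fin ler_pdivlMr //.
by apply: le_trans slope _; rewrite le_max lexx.
Qed.

Section Solutions.
Variables (ell : X -> R) (lam : R).
Hypotheses (ell_ge0 : forall x, 0 <= ell x) (lam_ge0 : 0 <= lam).

Lemma solution_finite (v : X -> \bar R) :
  is_solution d ell lam v -> v = (fun x => (fine (v x))%:E).
Proof.
move=> [vNy _ _ vG]; apply/funext => x.
case vx: (v x) => [r| |] //; last by have := vNy x; rewrite vx.
have := vG x; rewrite /G vx eqxx /= addey //.
by rewrite gt_eqF // (lt_le_trans ltNy0) // mule_ge0 // lee_fin.
Qed.

Lemma solution_slope (u : X -> R) x :
  is_solution d ell lam (fun z => (u z)%:E) ->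
  G d (fun z => (u z)%:E) x = (ell x - lam * u x)%:E.
Proof.
case=> _ _ _ /(_ x); have := G_ge0 (fun z => (u z)%:E) x.
case: (G _ _ x) => [g| |] //= _.
by rewrite -EFinM -EFinD => -[<-]; rewrite addrC addKr.
Qed.

Lemma solution_le_ell (u : X -> R) x :
  is_solution d ell lam (fun z => (u z)%:E) -> lam * u x <= ell x.
Proof.
move=> sol; have := G_ge0 (fun z => (u z)%:E) x.
by rewrite (solution_slope x sol) lee_fin subr_ge0.
Qed.

Lemma solution_sub (u : X -> R) x y :
  is_solution d ell lam (fun z => (u z)%:E) ->
  u x - u y <= (ell x - lam * u x) * d x y.
Proof.
move=> sol; have [->|yx] := pselect (y = x).
  by rewrite subrr metric_xx mulr0.
have dxy_gt0 : 0 < d x y by apply/metric_gt0/nesym.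
have := G_ge_quotient u yx; rewrite (solution_slope x sol) lee_fin => slope.
rewrite -ler_pdivrMr //; apply: le_trans slope.
by rewrite ler_wpM2r ?invr_ge0 ?metric_ge0 // le_max lexx.
Qed.

Lemma lsc_EFin (u : X -> R) :
  (forall x y, u x - u y <= ell x * d x y) -> lsc d (fun x => (u x)%:E).
Proof.
move=> u_sub x [s| |] //=; last by exists 1 => // y _; rewrite ltNye.
rewrite lte_fin => s_lt.
have ell1_gt0 : 0 < ell x + 1 by rewrite ltr_wpDl.
exists ((u x - s) / (ell x + 1)); first by rewrite divr_gt0 // subr_gt0.
move=> y; rewrite ltr_pdivlMr // lte_fin mulrDr mulr1 => near.
have := u_sub x y; have := metric_ge0 x y; have := ell_ge0 x; nra.
Qed.

Lemma is_solution_EFin (u : X -> R) :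
  (forall x, 0 <= u x) ->
  (forall x, lam * u x <= ell x) ->
  (forall x y, u x - u y <= (ell x - lam * u x) * d x y) ->
  (forall x, ((ell x - lam * u x)%:E <= G d (fun z => (u z)%:E) x)%E) ->
  ereal_inf (range (fun x => (u x)%:E)) = 0%E ->
  is_solution d ell lam (fun x => (u x)%:E).
Proof.
move=> u_ge0 u_le u_sub G_ge inf_eq0; split => //.
- apply: lsc_EFin => x y; apply: le_trans (u_sub x y) _.
  by rewrite ler_wpM2r ?metric_ge0 // gerBl mulr_ge0.
- move=> x; have -> : G d (fun z => (u z)%:E) x = (ell x - lam * u x)%:E.
    apply/le_anti; rewrite G_ge andbT; apply: G_le; first by rewrite subr_ge0.
    by move=> y _; exact: u_sub.
  by rewrite -EFinM -EFinD addrC subrK.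
Qed.

Lemma perron_solution_EFin (u : X -> R) :
  is_solution d ell lam (fun x => (u x)%:E) ->
  (forall w : X -> R, is_solution d ell lam (fun x => (w x)%:E) ->
     forall x, w x <= u x) ->
  is_perron_solution d ell lam (fun x => (u x)%:E).
Proof.
move=> sol greatest; split => // x; apply/le_anti/andP; split.
  by apply: ereal_sup_ubound; exists (fun x => (u x)%:E).
apply: ge_ereal_sup => _ [v sol_v <-].
move: (sol_v); rewrite (solution_finite sol_v) => /greatest le_u /=.
by rewrite lee_fin le_u.
Qed.

End Solutions.

Lemma ereal_inf_EFin_lt (f : X -> R) e :
  ereal_inf (range (fun x => (f x)%:E)) = 0%E -> 0 < e -> exists x, f x < e.
Proof.
move=> inf_eq0 e_gt0; have : (ereal_inf (range (fun x => (f x)%:E)) < e%:E)%E.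
  by rewrite inf_eq0 lte_fin.
by move=> /ereal_inf_lt [_ [x _ <-]]; rewrite lte_fin; exists x.
Qed.

End GlobalSlope.

Section Discounted.
Variables (R : realType) (X : Type) (d : X -> X -> R) (ell : X -> R) (lam : R).
Hypotheses (md : is_metric d) (ell_ge0 : forall x, 0 <= ell x).
Hypotheses (ell_lsc : lsc d (fun x => (ell x)%:E)) (lam_gt0 : 0 < lam).

Let discount_gt0 x y : 0 < 1 + lam * d x y.
Proof. by rewrite ltr_pwDl // mulr_ge0 ?metric_ge0 // ltW. Qed.

Lemma T_EFin_le (u : X -> R) x y :
  (T d ell lam (fun z => (u z)%:E) x <=
     ((u y + ell x * d x y) / (1 + lam * d x y))%:E)%E.
Proof. by apply: ereal_inf_lbound; exists y. Qed.

Lemma T_EFin_ge (u : X -> R) x b :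
  (forall y, b <= (u y + ell x * d x y) / (1 + lam * d x y)) ->
  (b%:E <= T d ell lam (fun z => (u z)%:E) x)%E.
Proof. by move=> b_le; apply: le_ereal_inf_tmp => _ [y _ <-]; rewrite lee_fin. Qed.

Definition iterT n := iter n (T d ell lam) (fun x => (ell x / lam)%:E).

Definition iterTr n x := fine (iterT n x).

Lemma iterT_bounds n x :
  iterT n x = (iterTr n x)%:E /\ 0 <= iterTr n x <= ell x / lam.
Proof.
elim: n x => [|n IH] x; first by rewrite /iterTr /= lexx andbT divr_ge0 // ltW.
have iterT_n : iterT n = (fun y => (iterTr n y)%:E).
  by apply/funext => y; case: (IH y).
have ge0 : (0 <= iterT n.+1 x)%E.
  rewrite /iterT iterS -/(iterT n) iterT_n; apply: T_EFin_ge => y.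
  have [_ /andP[le0 _]] := IH y.
  by rewrite divr_ge0 ?addr_ge0 ?mulr_ge0 ?metric_ge0 // ltW.
have le_ell : (iterT n.+1 x <= (ell x / lam)%:E)%E.
  rewrite /iterT iterS -/(iterT n) iterT_n; apply: le_trans (T_EFin_le _ x x) _.
  have [_ /andP[_ le_n]] := IH x.
  by rewrite metric_xx // !mulr0 !addr0 divr1 lee_fin.
move: ge0 le_ell; rewrite /iterTr; case: (iterT n.+1 x) => [r| |] //=.
by rewrite !lee_fin => r_ge0 r_le; split => //; apply/andP.
Qed.

Lemma iterT_EFin n : iterT n = (fun x => (iterTr n x)%:E).
Proof. by apply/funext => x; case: (iterT_bounds n x). Qed.

Lemma iterTr_succ_le n x y :
  iterTr n.+1 x <= (iterTr n y + ell x * d x y) / (1 + lam * d x y).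
Proof.
rewrite -lee_fin -(iterT_bounds n.+1 x).1 /iterT iterS -/(iterT n) iterT_EFin.
exact: T_EFin_le.
Qed.

Lemma iterTr_succ_ge n x b :
  (forall y, b <= (iterTr n y + ell x * d x y) / (1 + lam * d x y)) ->
  b <= iterTr n.+1 x.
Proof.
rewrite -lee_fin -(iterT_bounds n.+1 x).1 /iterT iterS -/(iterT n) iterT_EFin.
exact: T_EFin_ge.
Qed.

Lemma Tinf_iterT x :
  Tinf d ell lam (fun x => (ell x / lam)%:E) x =
  ereal_inf (range (fun n => iterT n x)).
Proof.
apply/cvg_lim => //; apply: ereal_nonincreasing_cvgn.
apply/nonincreasing_seqP => n; rewrite -/(iterT n.+1 x) -/(iterT n x).
rewrite !iterT_EFin lee_fin; apply: le_trans (iterTr_succ_le n x x) _.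
by rewrite metric_xx // !mulr0 !addr0 divr1.
Qed.

Definition ulam x := fine (Tinf d ell lam (fun x => (ell x / lam)%:E) x).

Lemma Tinf_EFin :
  Tinf d ell lam (fun x => (ell x / lam)%:E) = (fun x => (ulam x)%:E).
Proof.
apply/funext => x; rewrite /ulam.
have ge0 : (0 <= Tinf d ell lam (fun x => (ell x / lam)%:E) x)%E.
  rewrite Tinf_iterT; apply: le_ereal_inf_tmp => _ [n _ <-].
  by rewrite iterT_EFin lee_fin; case/andP: (iterT_bounds n x).2.
have le_ell : (Tinf d ell lam (fun x => (ell x / lam)%:E) x <= (ell x / lam)%:E)%E.
  by rewrite Tinf_iterT; apply: ereal_inf_lbound; exists 0%N.
by move: ge0 le_ell; case: (Tinf _ _ _ _ x).
Qed.

Lemma ulam_le_iterTr n x : ulam x <= iterTr n x.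
Proof.
have : (Tinf d ell lam (fun x => (ell x / lam)%:E) x <= iterT n x)%E.
  by rewrite Tinf_iterT; apply: ereal_inf_lbound; exists n.
by rewrite Tinf_EFin iterT_EFin lee_fin.
Qed.

Lemma ulam_ge_lb x b : (forall n, b <= iterTr n x) -> b <= ulam x.
Proof.
move=> b_le; have : (b%:E <= Tinf d ell lam (fun x => (ell x / lam)%:E) x)%E.
  by rewrite Tinf_iterT; apply: le_ereal_inf_tmp => _ [n _ <-]; rewrite iterT_EFin lee_fin.
by rewrite Tinf_EFin lee_fin.
Qed.

Lemma ulam_ge0 x : 0 <= ulam x.
Proof. by apply: ulam_ge_lb => n; case/andP: (iterT_bounds n x).2. Qed.

Lemma ulam_le_ell x : lam * ulam x <= ell x.
Proof. by rewrite mulrC -ler_pdivlMr //; exact: (ulam_le_iterTr 0). Qed.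

Lemma ulam_sub x y : ulam x - ulam y <= (ell x - lam * ulam x) * d x y.
Proof.
suff : ulam x * (1 + lam * d x y) - ell x * d x y <= ulam y by lra.
apply: ulam_ge_lb => n; rewrite lerBlDr -ler_pdivlMr //.
exact: le_trans (ulam_le_iterTr n.+1 x) (iterTr_succ_le n x y).
Qed.



Lemma ulam_inf_eq0 : ereal_inf (range (fun x => (ell x)%:E)) = 0%E ->
  ereal_inf (range (fun x => (ulam x)%:E)) = 0%E.
Proof.
move=> ell_inf; apply/le_anti/andP; split; last first.
  by apply: le_ereal_inf_tmp => _ [x _ <-]; rewrite lee_fin ulam_ge0.
apply/lee_addgt0Pr => e e_gt0; rewrite add0e.
have [x ell_x] := ereal_inf_EFin_lt ell_inf (mulr_gt0 e_gt0 lam_gt0).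
apply: ge_ereal_inf; exists (ulam x)%:E; first by exists x.
rewrite lee_fin -(ler_pM2l lam_gt0); apply: le_trans (ulam_le_ell x) _.
by rewrite mulrC ltW.
Qed.

Lemma solution_le_iterTr (u : X -> R) n x :
  is_solution d ell lam (fun z => (u z)%:E) -> u x <= iterTr n x.
Proof.
move=> sol; elim: n x => [|n IH] x.
  by rewrite /iterTr /= ler_pdivlMr // mulrC (solution_le_ell x sol).
apply: iterTr_succ_ge => y; rewrite ler_pdivlMr //.
have := solution_sub md x y sol; have := IH y; lra.
Qed.

Lemma ulam_ge_comparison x c r M : 0 < r -> M <= 0 ->
  (forall z, d x z < r -> c <= ell z) ->
  (forall w, r <= d x w -> c / lam + (1 + lam * d x w) * M <= ulam w) ->
  c / lam + M <= ulam x.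
Proof.
move=> r_gt0 M_le0 ell_ge outside.
pose phi z := c / lam + (1 + lam * d x z) * M.
suff phi_le n z : d x z < r -> phi z <= iterTr n z.
  apply: ulam_ge_lb => n; have := phi_le n x.
  by rewrite /phi metric_xx // mulr0 addr0 mul1r; apply.
elim: n z => [|n IH] z xz.
  have : c / lam <= ell z / lam by rewrite ler_pM2r ?invr_gt0 // ell_ge.
  have : (1 + lam * d x z) * M <= 0 by rewrite mulr_ge0_le0 // ltW.
  rewrite /phi /iterTr /=; lra.
apply: iterTr_succ_ge => y; rewrite ler_pdivlMr //.
have phi_y : phi y <= iterTr n y.
  have [/IH //|/outside] := ltP (d x y) r.
  by move/le_trans; apply; exact: ulam_le_iterTr.
have discount_tri : 1 + lam * d x y <= (1 + lam * d x z) * (1 + lam * d z y).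
  have : 0 <= lam * d x z * (lam * d z y) by rewrite !mulr_ge0 ?metric_ge0 // ltW.
  have : lam * d x y <= lam * d x z + lam * d z y.
    by rewrite -mulrDr ler_pM2l // metric_triangle.
  rewrite mulrDl !mulrDr !mul1r mulr1; lra.
have := ler_wnM2r M_le0 discount_tri.
have : c * d z y <= ell z * d z y by rewrite ler_wpM2r ?metric_ge0 // ell_ge.
have -> : phi z * (1 + lam * d z y) =
          c / lam + c * d z y + (1 + lam * d x z) * (1 + lam * d z y) * M.
  by rewrite /phi; field; rewrite gt_eqF.
rewrite /phi in phi_y; lra.
Qed.


Lemma ulam_slope_ge x :
  ((ell x - lam * ulam x)%:E <= G d (fun z => (ulam z)%:E) x)%E.
Proof.
apply: (G_ge_witness md) => eta eta_gt0 eta_lt.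
set g := ell x - lam * ulam x in eta_lt *.
set c := ell x - eta / 2.
have c_lt : (c%:E < (ell x)%:E)%E by rewrite lte_fin /c; lra.
have [r r_gt0 ell_gt] := ell_lsc c_lt.
have ell_ge z : d x z < r -> c <= ell z by move/ell_gt; rewrite lte_fin => /ltW.
have lr_gt0 : 0 < 1 + lam * r by rewrite ltr_pwDl // mulr_ge0 // ltW.
set eps := eta * r / (2 * (1 + lam * r)).
have eps_gt0 : 0 < eps by rewrite divr_gt0 ?mulr_gt0.
have eps_r : eps * (1 + lam * r) = eta * r / 2 by rewrite /eps; field; rewrite gt_eqF.
(* The cone with this M exceeds ulam x at x, so it fails outside the ball at some w;
   eps is small enough for that w to witness the slope g - eta. *)
set M := ulam x - c / lam + eps.
have lamM : lam * M = - (g - eta / 2 - lam * eps).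
  by rewrite /M /g /c; field; rewrite gt_eqF.
have lam_eps : lam * eps <= eta / 2.
  rewrite -(ler_pM2r lr_gt0) -mulrA eps_r; nra.
have M_le0 : M <= 0 by rewrite -(pmulr_rle0 _ lam_gt0) lamM oppr_le0; lra.
have [w far below] : exists2 w, r <= d x w &
    ulam w < c / lam + (1 + lam * d x w) * M.
  apply: contrapT => /forall2NP none.
  have := ulam_ge_comparison r_gt0 M_le0 ell_ge.
  suff /[swap]/[apply] : forall w, r <= d x w -> c / lam + (1 + lam * d x w) * M <= ulam w.
    by rewrite /M; lra.
  by move=> w rw; case: (none w) => // /negP; rewrite -leNgt.
exists w; first exact: lt_le_trans far.
have E : (1 + lam * d x w) * M = M - d x w * (g - eta / 2 - lam * eps).
  by rewrite mulrDl mul1r mulrAC lamM; ring.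
have : r * (eta / 2 - lam * eps) <= d x w * (eta / 2 - lam * eps).
  by rewrite ler_wpM2r // subr_ge0.
move: below; rewrite E /M; nra.
Qed.

Lemma Tinf_perron : ereal_inf (range (fun x => (ell x)%:E)) = 0%E ->
  is_perron_solution d ell lam (Tinf d ell lam (fun x => (ell x / lam)%:E)).
Proof.
move=> ell_inf; rewrite Tinf_EFin.
apply: (perron_solution_EFin (ltW lam_gt0)).
  apply: (is_solution_EFin md ell_ge0 (ltW lam_gt0)); [exact: ulam_ge0 | exact: ulam_le_ell |
    exact: ulam_sub | exact: ulam_slope_ge | exact: ulam_inf_eq0].
by move=> u sol x; apply: ulam_ge_lb => n; exact: solution_le_iterTr.
Qed.

End Discounted.

Section Undiscounted.
Variables (R : realType) (X : Type) (d : X -> X -> R) (ell : X -> R).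
Hypotheses (md : is_metric d) (ell_ge0 : forall x, 0 <= ell x).

Definition step_cost (xs : nat -> X) n := ell (xs n) * d (xs n) (xs n.+1).

Definition path_cost (xs : nat -> X) : \bar R :=
  (\sum_(0 <= n <oo) (step_cost xs n)%:E)%E.

Definition admissible x (xs : nat -> X) :=
  xs 0%N = x /\ (fun n => ell (xs n)) @ \oo --> 0.

Definition path_cons x (xs : nat -> X) : nat -> X :=
  fun n => if n is m.+1 then xs m else x.

Definition path_drop N (xs : nat -> X) : nat -> X := fun n => xs (n + N)%N.

Lemma step_cost_ge0 xs n : 0 <= step_cost xs n.
Proof. by rewrite mulr_ge0 ?metric_ge0. Qed.

Lemma path_cost_ge0 xs : (0 <= path_cost xs)%E.
Proof. by apply: nneseries_ge0 => n _ _; rewrite lee_fin step_cost_ge0. Qed.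

Lemma partial_le_path_cost xs N :
  ((\sum_(0 <= i < N) step_cost xs i)%:E <= path_cost xs)%E.
Proof.
by rewrite -sumEFin; apply: nneseries_lim_ge => n _ _; rewrite lee_fin step_cost_ge0.
Qed.

Lemma path_cost_drop N xs :
  path_cost (path_drop N xs) = (\sum_(N <= n <oo) (step_cost xs n)%:E)%E.
Proof. by rewrite -nneseries_addn // => n; rewrite lee_fin step_cost_ge0. Qed.

Lemma path_cost_split N xs : path_cost xs =
  ((\sum_(0 <= i < N) step_cost xs i)%:E + path_cost (path_drop N xs))%E.
Proof.
rewrite path_cost_drop /path_cost (nneseries_split 0 N) ?add0n ?sumEFin //.
by move=> n _; rewrite lee_fin step_cost_ge0.
Qed.

Lemma path_cost_cons x xs :
  path_cost (path_cons x xs) = ((ell x * d x (xs 0%N))%:E + path_cost xs)%E.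
Proof.
rewrite (path_cost_split 1) big_nat1; congr (_ + path_cost _)%E.
by apply/funext => n; rewrite /path_drop addn1.
Qed.

Lemma admissible_cons x xs :
  (fun n => ell (xs n)) @ \oo --> 0 -> admissible x (path_cons x xs).
Proof. by move=> ell_cvg; split => //; rewrite -cvg_shiftS; apply: ell_cvg. Qed.

Lemma admissible_drop N xs :
  (fun n => ell (xs n)) @ \oo --> 0 -> admissible (xs N) (path_drop N xs).
Proof.
move=> ell_cvg; split; first by rewrite /path_drop add0n.
by move: ell_cvg; rewrite -(cvg_shiftn N); apply.
Qed.

Lemma u0_le_path_cost x xs : admissible x xs -> (u0 d ell x <= path_cost xs)%E.
Proof. by move=> adm; apply: ereal_inf_lbound; exists xs. Qed.

Lemma u0_ge x b :
  (forall xs, admissible x xs -> (b <= path_cost xs)%E) -> (b <= u0 d ell x)%E.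
Proof. by move=> b_le; apply: le_ereal_inf_tmp => _ [xs adm <-]; exact: b_le. Qed.

Lemma u0_ge0 x : (0 <= u0 d ell x)%E.
Proof. by apply: u0_ge => xs _; exact: path_cost_ge0. Qed.

Lemma u0_le_step x y : (u0 d ell x <= (ell x * d x y)%:E + u0 d ell y)%E.
Proof.
rewrite -leeBlDl //; apply: u0_ge => xs [<- ell_cvg].
rewrite leeBlDl // -path_cost_cons.
by apply: u0_le_path_cost; exact: admissible_cons.
Qed.

Lemma path_leaves_ball x r c xs : 0 < c -> (fun n => ell (xs n)) @ \oo --> 0 ->
  (forall z, d x z < r -> c <= ell z) ->
  exists k, r <= d x (xs k) /\ forall i, (i < k)%N -> d x (xs i) < r.
Proof.
move=> c_gt0 ell_cvg ell_ge.
have leaves : exists n, r <= d x (xs n).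
  have [N _ small] := (cvgrPdist_lt _ _).1 ell_cvg c c_gt0.
  exists N; rewrite leNgt; apply/negP => /ell_ge; apply/negP; rewrite -ltNge.
  by apply: le_lt_trans (small N (leqnn N)); rewrite sub0r normrN ler_norm.
have [k r_le k_min] := ex_minnP leaves; exists k; split => // i ik.
by rewrite ltNge; apply/negP => /k_min; rewrite leqNgt ik.
Qed.

Lemma partial_cost_ge_dist xs k c : 0 <= c ->
  (forall i, (i < k)%N -> c <= ell (xs i)) ->
  c * d (xs 0%N) (xs k) <= \sum_(0 <= i < k) step_cost xs i.
Proof.
move=> c_ge0 ell_ge.
apply: le_trans (_ : c * \sum_(0 <= i < k) d (xs i) (xs i.+1) <= _).
  by rewrite ler_wpM2l // metric_le_path_length.
rewrite mulr_sumr; apply: ler_sum_nat => i /andP[_ ik].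
by rewrite ler_wpM2r ?metric_ge0 // ell_ge.
Qed.

Lemma sub_le_partial_cost (u : X -> R) :
  (forall a b, u a - u b <= ell a * d a b) ->
  forall xs n, u (xs 0%N) - u (xs n) <= \sum_(0 <= i < n) step_cost xs i.
Proof.
move=> u_sub xs; elim=> [|n IH]; first by rewrite big_geq // subrr.
by rewrite big_nat_recr //=; have := u_sub (xs n) (xs n.+1); rewrite /step_cost; lra.
Qed.

Lemma solution0_le_path_cost (u : X -> R) x xs :
  is_solution d ell 0 (fun z => (u z)%:E) -> admissible x xs ->
  ((u x)%:E <= path_cost xs)%E.
Proof.
move=> sol [<- ell_cvg].
have [cost_fin|] := ltP (path_cost xs) +oo%E; last first.
  by rewrite leye_eq => /eqP ->; exact: leey.
have u_sub a b : u a - u b <= ell a * d a b.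
  by have := solution_sub md a b sol; rewrite mul0r subr0.
apply/lee_subgt0Pr => e e_gt0; rewrite -EFinB.
have e2_gt0 : 0 < e / 2 by rewrite divr_gt0.
have [_ _ u_inf _] := sol; have [y u_y] := ereal_inf_EFin_lt u_inf e2_gt0.
have C_gt0 : 0 < d (xs 0%N) y + 1 by rewrite ltr_wpDl ?metric_ge0.
have [N small] := weight_mul_length_small (a := fun n => ell (xs n))
  (l := fun n => d (xs n) (xs n.+1)) (fun n => ell_ge0 _) (fun n => metric_ge0 md _ _)
  ell_cvg (nnseries_is_cvg (step_cost_ge0 xs) cost_fin) C_gt0 e2_gt0.
apply: le_trans (partial_le_path_cost xs N); rewrite lee_fin.
have := sub_le_partial_cost u_sub xs N; have := u_sub (xs N) y.
have : ell (xs N) * d (xs N) y <= e / 2.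
  apply: le_trans small; rewrite ler_wpM2l //.
  have := metric_triangle_l md (xs 0%N) (xs N) y.
  have := metric_le_path_length md xs N; lra.
lra.
Qed.


Section Summable.
Hypotheses (ell_lsc : lsc d (fun x => (ell x)%:E)) (h0 : H0 d ell).

Lemma u0_lty x : (u0 d ell x < +oo)%E.
Proof.
have [xs [cost_fin ell_cvg]] := h0.
apply: le_lt_trans (u0_le_path_cost (admissible_cons x ell_cvg)) _.
by rewrite path_cost_cons lte_add_pinfty // ltry.
Qed.

Definition u0r x := fine (u0 d ell x).

Lemma u0_EFin : u0 d ell = (fun x => (u0r x)%:E).
Proof.
apply/funext => x; have := u0_ge0 x; have := u0_lty x.
by rewrite /u0r; case: (u0 d ell x).
Qed.

Lemma u0r_sub x y : u0r x - u0r y <= ell x * d x y.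
Proof. have := u0_le_step x y; rewrite u0_EFin /= -EFinD lee_fin; lra. Qed.

Lemma u0_inf_eq0 : ereal_inf (range (u0 d ell)) = 0%E.
Proof.
have [xs [cost_fin ell_cvg]] := h0.
apply/le_anti/andP; split; last first.
  by apply: le_ereal_inf_tmp => _ [x _ <-]; exact: u0_ge0.
have step_ge0 k : (0 <= (step_cost xs k)%:E)%E by rewrite lee_fin step_cost_ge0.
have tail0 := nneseries_tail_cvg (cost_fin : (path_cost xs < +oo)%E)
  (fun k _ => step_ge0 k).
rewrite -(cvg_lim _ tail0) //; apply: lime_ge; first exact: cvgP tail0.
apply: nearW => N; rewrite -path_cost_drop.
apply: ge_ereal_inf; exists (u0 d ell (xs N)); first by exists (xs N).
exact/u0_le_path_cost/admissible_drop.
Qed.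

Lemma u0r_slope_ge x : ((ell x)%:E <= G d (fun z => (u0r z)%:E) x)%E.
Proof.
apply: (G_ge_witness md) => eta eta_gt0 eta_lt.
set c := ell x - eta / 2.
have c_gt0 : 0 < c by rewrite /c; lra.
have c_lt : (c%:E < (ell x)%:E)%E by rewrite lte_fin /c; lra.
have [r r_gt0 ell_gt] := ell_lsc c_lt.
have ell_ge z : d x z < r -> c <= ell z by move/ell_gt; rewrite lte_fin => /ltW.
have : (u0 d ell x < (u0r x + eta * r / 2)%:E)%E.
  by rewrite u0_EFin lte_fin ltrDl divr_gt0 ?mulr_gt0.
move=> /ereal_inf_lt [_ [xs [xs0 ell_cvg] <-]].
rewrite -/(path_cost xs) => cost_lt.
have [k [far inside]] := path_leaves_ball c_gt0 ell_cvg ell_ge.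
exists (xs k); first exact: lt_le_trans far.
have near_opt : \sum_(0 <= i < k) step_cost xs i + u0r (xs k) < u0r x + eta * r / 2.
  rewrite -lte_fin; apply: le_lt_trans cost_lt.
  rewrite (path_cost_split k) EFinD.
  apply: leeD => //; have := u0_le_path_cost (admissible_drop k ell_cvg).
  by rewrite u0_EFin.
have := partial_cost_ge_dist (ltW c_gt0) (fun i ik => ell_ge _ (inside i ik)).
have : eta * r <= eta * d x (xs k) by rewrite ler_wpM2l // ltW.
rewrite xs0 /c; lra.
Qed.

Lemma u0_perron : is_perron_solution d ell 0 (u0 d ell).
Proof.
rewrite u0_EFin; apply: (perron_solution_EFin (lexx 0)).
  apply: (is_solution_EFin md ell_ge0 (lexx 0)) => [x|x|x y|x|].
  - by have := u0_ge0 x; rewrite u0_EFin lee_fin.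
  - by rewrite mul0r.
  - by rewrite mul0r subr0 u0r_sub.
  - by rewrite mul0r subr0; exact: u0r_slope_ge.
  - by rewrite -u0_EFin u0_inf_eq0.
move=> u sol x; have : ((u x)%:E <= u0 d ell x)%E.
  by apply: u0_ge => xs; exact: solution0_le_path_cost.
by rewrite u0_EFin lee_fin.
Qed.

End Summable.

End Undiscounted.

Theorem corollary4p7 (R : realType) (X : Type) (d : X -> X -> R)
    (ell : X -> R) :
  is_metric d ->
  (forall x, 0 <= ell x) ->
  lsc d (fun x => (ell x)%:E) ->
  ereal_inf (range (fun x => (ell x)%:E)) = 0%E ->
  (forall lam : R, 0 < lam ->
     is_perron_solution d ell lam
       (Tinf d ell lam (fun x => (ell x / lam)%:E))) /\
  (H0 d ell -> is_perron_solution d ell 0 (u0 d ell)).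
Proof.
move=> md ell_ge0 ell_lsc ell_inf; split => [lam lam_gt0|h0].
  exact: Tinf_perron.
exact: u0_perron.
Qed.
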